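(* Let $(X_n)_{n\ge0}$ be an ergodic discrete-time Markov chain on a finite state space $\mathcal S$ with transition probabilities $p_{xy}$ and stationary distribution $\pi$, and let $0\in\mathcal S$ be one of its states. Suppose there is a non-negative function $f:\mathcal S\to\mathbb R$ and constants $\varepsilon>0$, $c_0>0$, $C>0$ such that \[ f(0)=0,\qquad \max_{x\in\mathcal S:\ p_{0x}>0}f(x)=c_0,\qquad |f(X_{n+1})-f(X_n)|\le C, \] \[ \mathbb E\big(f(X_{n+1})-f(X_n)\mid X_n=x\big)<-\varepsilon\quad\text{for all }x\ne0. \] Then there are $c_1,c_2>0$ depending only on $c_0,C,\varepsilon$ such that for all $k>0$, \[ \pi(A_k)\le c_1e^{-c_2k},\qquad\text{where }A_k=\{x\in\mathcal S: f(x)>k\}. \] *)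

From HB Require Import structures.
From mathcomp Require Import all_boot all_order all_algebra.
From mathcomp Require Import all_classical all_reals all_analysis.
Set Implicit Arguments. Unset Strict Implicit. Unset Printing Implicit Defensive.
Import Order.TTheory GRing.Theory Num.Theory.
Local Open Scope ring_scope.

Section Markov.
Variables (R : realType) (T : finType).

Definition stochastic (P : T -> T -> R) : Prop :=
  (forall x y, 0 <= P x y) /\ (forall x, \sum_(y : T) P x y = 1).

Fixpoint nstep (P : T -> T -> R) (n : nat) (x y : T) : R :=
  match n with
  | 0%N => if x == y then 1 else 0
  | n'.+1 => \sum_(z : T) nstep P n' x z * P z y
  end.

Definition irreducible (P : T -> T -> R) : Prop :=
  forall x y, exists n : nat, 0 < nstep P n x y.

(* every state has period 1: the gcd of {n >= 1 : p^{(n)}_{xx} > 0} is 1 *)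
Definition aperiodic (P : T -> T -> R) : Prop :=
  forall x (d : nat), (forall n : nat, (0 < n)%N -> 0 < nstep P n x x -> (d %| n)%N) -> d = 1%N.

Definition ergodic (P : T -> T -> R) : Prop :=
  stochastic P /\ irreducible P /\ aperiodic P.

Definition stationary (P : T -> T -> R) (pi : T -> R) : Prop :=
  (forall x, 0 <= pi x) /\ (\sum_(x : T) pi x = 1) /\
  (forall y, pi y = \sum_(x : T) pi x * P x y).

Definition drift (P : T -> T -> R) (f : T -> R) (x : T) : R :=
  \sum_(y : T) P x y * (f y - f x).

Definition piA (pi : T -> R) (f : T -> R) (k : R) : R :=
  \sum_(x : T | k < f x) pi x.

End Markov.

From HB Require Import structures.
From mathcomp Require Import all_boot all_order all_algebra.
From mathcomp Require Import all_classical all_reals all_analysis.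
From mathcomp Require Import ring lra.
Set Implicit Arguments. Unset Strict Implicit. Unset Printing Implicit Defensive.
Import Order.TTheory GRing.Theory Num.Theory.
Local Open Scope ring_scope.

(* With r = eps/(eps+C) and theta = ln(1+r)/C, the Lyapunov function
   V = exp(theta f) satisfies P V <= (1 - r^2/2) V off s0: since every step of
   theta f has size at most a = theta C, exp lies below its chord on [-a, a],
   and e^a = 1 + r makes the chord estimate of the drift collapse to 1 - r^2/2.
   At s0 one only has P V <= exp(theta c0).  Since pi V = pi (P V), this bounds
   pi V by 1 + 2 exp(theta c0) / r^2, and Markov's inequality gives
   pi(f > k) <= exp(-theta k) pi V. *)

Section ExpChord.
Local Open Scope convex_scope.

Lemma expR_le_chord (R : realType) (a u : R) : 0 < a -> `|u| <= a ->
  expR u <= (expR a + expR (- a)) / 2 + u * ((expR a - expR (- a)) / (2 * a)).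
Proof.
move=> a_gt0; rewrite ler_norml => /andP[ua au].
have a_neq0 : a != 0 by rewrite gt_eqF.
have t_ge0 : 0 <= (a - u) / (2 * a) by apply: divr_ge0; lra.
have t_le1 : (a - u) / (2 * a) <= 1 by rewrite ler_pdivrMr; lra.
have := convex_expR (Itv01 t_ge0 t_le1) (- a) a; rewrite !convRE /=.
have -> : (a - u) / (2 * a) * - a + (1 - (a - u) / (2 * a)) * a = u.
  by field; rewrite a_neq0.
move/le_trans; apply; rewrite /unstable.onem le_eqVlt; apply/orP; left; apply/eqP.
by field; rewrite a_neq0.
Qed.

End ExpChord.

Lemma expR_drift_le (R : realType) (T : finType) (P : T -> T -> R) (f : T -> R)
    (x : T) (C theta a : R) :
  0 < a -> 0 <= theta -> theta * C <= a ->
  (forall y, 0 <= P x y) -> \sum_y P x y = 1 ->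
  (forall y, 0 < P x y -> `|f y - f x| <= C) ->
  \sum_y P x y * expR (theta * f y) <=
  expR (theta * f x) * ((expR a + expR (- a)) / 2 +
     theta * ((expR a - expR (- a)) / (2 * a)) * drift P f x).
Proof.
move=> a_gt0 theta_ge0 thetaC P_ge0 P_sum f_C.
set mid := (expR a + expR (- a)) / 2.
set slope := theta * ((expR a - expR (- a)) / (2 * a)).
have -> : mid + slope * drift P f x = \sum_y P x y * (mid + slope * (f y - f x)).
  rewrite /drift [RHS](eq_bigr (fun y => mid * P x y + slope * (P x y * (f y - f x)))).
    by rewrite big_split -!mulr_sumr P_sum mulr1.
  by move=> y _; ring.
rewrite mulr_sumr; apply: ler_sum => y _.
have [->|Pxy_neq0] := eqVneq (P x y) 0; first by rewrite !(mul0r, mulr0, addr0).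
have Pxy_gt0 : 0 < P x y by rewrite lt_def Pxy_neq0 P_ge0.
have step_le : `|theta * (f y - f x)| <= a.
  rewrite normrM ger0_norm //; apply: le_trans thetaC.
  by apply: ler_wpM2l => //; exact: f_C.
have -> : theta * f y = theta * f x + theta * (f y - f x) by ring.
rewrite expRD mulrCA; apply: ler_wpM2l; first exact: expR_ge0.
apply: ler_wpM2l; first exact: P_ge0.
by rewrite /slope mulrAC; exact: expR_le_chord.
Qed.

Lemma chord_factor_le (R : realType) (r a C d : R) :
  0 < r -> 0 < a -> 0 < C -> expR a = 1 + r -> d <= - (r * C) ->
  (expR a + expR (- a)) / 2 + a / C * ((expR a - expR (- a)) / (2 * a)) * d
    <= 1 - r ^+ 2 / 2.
Proof.
move=> r_gt0 a_gt0 C_gt0 ea d_le.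
have r1_neq0 : 1 + r != 0 by rewrite gt_eqF //; lra.
have slope_ge0 : 0 <= a / C * ((expR a - expR (- a)) / (2 * a)).
  have ema_le : expR (- a) <= expR a by rewrite ler_expR; lra.
  have [a_ge0 C_ge0] := (ltW a_gt0, ltW C_gt0).
  by rewrite mulr_ge0 ?divr_ge0 ?subr_ge0 ?mulr_ge0.
apply: le_trans (lerD (lexx _) (ler_wpM2l slope_ge0 d_le)) _.
rewrite expRN ea le_eqVlt; apply/orP; left; apply/eqP.
by field; rewrite r1_neq0 !gt_eqF.
Qed.

Section Stationary.
Variables (R : realType) (T : finType) (P : T -> T -> R) (pi : T -> R).
Hypothesis pi_stat : stationary P pi.

Lemma stationary_mean (V : T -> R) :
  \sum_x pi x * V x = \sum_x pi x * \sum_y P x y * V y.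
Proof.
have [_ [_ pi_inv]] := pi_stat.
rewrite (eq_bigr (fun y => \sum_x pi x * P x y * V y)); last first.
  by move=> y _; rewrite {1}pi_inv mulr_suml.
rewrite exchange_big /=; apply: eq_bigr => x _.
by rewrite mulr_sumr; apply: eq_bigr => y _; rewrite mulrA.
Qed.

Lemma stationary_lyapunov_le (V : T -> R) (s0 : T) (rho b : R) :
  rho < 1 -> 0 <= b -> (forall x, 0 <= V x) ->
  (forall x, x != s0 -> \sum_y P x y * V y <= rho * V x) ->
  \sum_y P s0 y * V y <= b ->
  \sum_x pi x * V x <= V s0 + b / (1 - rho).
Proof.
move=> rho_lt1 b_ge0 V_ge0 V_contract V_s0.
have [pi_ge0 [pi_sum _]] := pi_stat.
set S := \sum_(x | x != s0) pi x * V x.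
have mean_split : \sum_x pi x * V x = pi s0 * V s0 + S by rewrite (bigD1 s0).
have pi_s0_le1 : pi s0 <= 1.
  by rewrite -pi_sum (bigD1 s0) //= lerDl sumr_ge0.
have mean_le : \sum_x pi x * V x <= pi s0 * b + rho * S.
  rewrite stationary_mean (bigD1 s0) //= /S mulr_sumr.
  apply: lerD; first exact: ler_wpM2l.
  by apply: ler_sum => x xs0; rewrite mulrCA; apply: ler_wpM2l; last exact: V_contract.
have S_le : S <= b / (1 - rho).
  have := pi_ge0 s0; have := V_ge0 s0.
  rewrite ler_pdivlMr ?subr_gt0 //; nra.
by rewrite mean_split lerD // ler_piMl.
Qed.

End Stationary.

Lemma markov_expR (R : realType) (T : finType) (w f : T -> R) (theta k : R) :
  (forall x, 0 <= w x) -> 0 <= theta ->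
  \sum_(x | k < f x) w x <= expR (- (theta * k)) * \sum_x w x * expR (theta * f x).
Proof.
move=> w_ge0 theta_ge0.
rewrite mulr_sumr [leRHS](bigID (fun x => k < f x)) /= -[leLHS]addr0 lerD //.
  apply: ler_sum => x k_lt_fx; rewrite mulrCA -expRD -{1}[w x]mulr1.
  rewrite ler_wpM2l // -expR0 ler_expR addrC subr_ge0 ler_wpM2l // ltW //.
by apply: sumr_ge0 => x _; rewrite !mulr_ge0 // expR_ge0.
Qed.

Theorem lemma2 (R : realType) (c0 C eps : R) :
  0 < eps -> 0 < c0 -> 0 < C ->
  exists c1 c2 : R, 0 < c1 /\ 0 < c2 /\
    forall (T : finType) (P : T -> T -> R) (pi : T -> R) (f : T -> R) (s0 : T),
      ergodic P -> stationary P pi ->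
      (forall x, 0 <= f x) ->
      f s0 = 0 ->
      (forall x, 0 < P s0 x -> f x <= c0) ->
      (exists x, 0 < P s0 x /\ f x = c0) ->
      (forall x y, 0 < P x y -> `|f y - f x| <= C) ->
      (forall x, x != s0 -> drift P f x < - eps) ->
      forall k : R, 0 < k -> piA pi f k <= c1 * expR (- (c2 * k)).
Proof.
move=> eps_gt0 c0_gt0 C_gt0.
set r := eps / (eps + C).
have r_gt0 : 0 < r by rewrite divr_gt0 // addr_gt0.
have rC_le : r * C <= eps by rewrite /r mulrAC ler_pdivrMr ?addr_gt0 //; nra.
set a := ln (1 + r).
have a_gt0 : 0 < a by apply: ln_gt0; lra.
have ea : expR a = 1 + r by rewrite lnK // posrE; lra.
set theta := a / C.
have theta_gt0 : 0 < theta by rewrite divr_gt0.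
have thetaC : theta * C <= a by rewrite /theta divfK ?gt_eqF.
set b := expR (theta * c0).
exists (1 + b / (r ^+ 2 / 2)), theta; split; last split => //.
  by rewrite addr_gt0 // divr_gt0 ?expR_gt0 // divr_gt0 // exprn_gt0.
move=> T P pi f s0 [[P_ge0 P_sum] _] pi_stat _ f_s0 f_c0 _ f_C f_drift k k_gt0.
have V_contract x : x != s0 ->
    \sum_y P x y * expR (theta * f y) <= (1 - r ^+ 2 / 2) * expR (theta * f x).
  move=> x_neq_s0; rewrite mulrC.
  apply: le_trans (expR_drift_le a_gt0 (ltW theta_gt0) thetaC (P_ge0 x) (P_sum x) (f_C x)) _.
  apply: ler_wpM2l; first exact: expR_ge0.
  apply: chord_factor_le => //; apply: le_trans (ltW (f_drift x x_neq_s0)) _.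
  by rewrite lerN2.
have V_s0 : \sum_y P s0 y * expR (theta * f y) <= b.
  rewrite -[b]mul1r -(P_sum s0) mulr_suml; apply: ler_sum => y _.
  have [->|Py_neq0] := eqVneq (P s0 y) 0; first by rewrite !mul0r.
  rewrite ler_wpM2l // ler_expR; apply: ler_wpM2l; first exact: ltW.
  by apply: f_c0; rewrite lt_def Py_neq0 P_ge0.
have pi_V : \sum_x pi x * expR (theta * f x) <= 1 + b / (r ^+ 2 / 2).
  have := stationary_lyapunov_le pi_stat _ (expR_ge0 _) (fun x => expR_ge0 _) V_contract V_s0.
  by rewrite f_s0 mulr0 expR0 subKr; apply; rewrite gtrBl divr_gt0 // exprn_gt0.
rewrite /piA; apply: le_trans (markov_expR f k _ (ltW theta_gt0)) _.
  by case: pi_stat.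
by rewrite [leRHS]mulrC ler_wpM2l ?expR_ge0.
Qed.
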